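(* For every positive integer $k$ there is a deterministic algorithm in the ordinal query model that, on every instance $(X,d)$ with $|X|=n\ge k$ and every profile $P$ consistent with $d$, makes exactly $\frac{k^2-k}{2}$ distance queries and outputs a set $C\subseteq X$ with $|C|\le k$ such that $\max_{x\in X} d(x,C)\le 2\cdot \mathrm{OPT}^{\mathrm{center}}_k(X,d)$. In other words, it has distortion $2$ for $k$-center.
   Context: Ordinal query model: $(X,d)$ is a finite metric space with $|X|=n$. Every point $x\in X$ reports a ranking $\pi_x$ of all points of $X$ such that $y$ is ranked above $y'$ only if $d(x,y)\le d(x,y')$ (ties broken arbitrarily); the collection $P=\{\pi_x\}_{x\in X}$ is a profile consistent with $d$. An algorithm receives $X$, $k$ and $P$ for free. Its only other access to $d$ is by querying the exact value $d(x,y)$ for pairs of its choice; each such value costs one query. For $C\subseteq X$ write $d(x,C)=\min_{c\in C}d(x,c)$. The $k$-center cost of $C$ is $\max_{x\in X}d(x,C)$, and $\mathrm{OPT}^{\mathrm{center}}_k(X,d)=\min_{C\subseteq X,|C|=k}\max_{x\in X}d(x,C)$. An algorithm has distortion $D$ if for every metric space and every consistent profile, the cost of its output is at most $D$ times the optimal cost. *)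

From HB Require Import structures.
From mathcomp Require Import all_boot all_order all_algebra.
From mathcomp Require Import reals constructive_ereal.
Set Implicit Arguments. Unset Strict Implicit. Unset Printing Implicit Defensive.
Import Order.TTheory GRing.Theory Num.Theory.
Local Open Scope ring_scope.
Local Open Scope ereal_scope.

Section Defs.
Variable R : realType.

Definition is_metric (X : finType) (d : X -> X -> R) : Prop :=
  [/\ forall x y, (0 <= d x y)%R,
      forall x y, d x y = 0%R <-> x = y,
      forall x y, d x y = d y x &
      forall x y z, (d x z <= d x y + d y z)%R].

(* A profile assigns to each point x a ranking (a list of all points of X,
   each exactly once, best first). *)
Definition profile (X : finType) := X -> seq X.

Definition consistent (X : finType) (d : X -> X -> R) (P : profile X) : Prop :=
  forall x, perm_eq (P x) (enum X) /\
            pairwise (fun y y' => (d x y <= d x y')%R) (P x).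

(* Deterministic adaptive query algorithm: a query tree. A node either
   outputs a set of centers, or queries the exact value d(x,y) and continues
   depending on the answer. *)
Inductive qtree (X : finType) : Type :=
  | QRet of {set X}
  | QAsk of X & X & (R -> qtree X).

Fixpoint run (X : finType) (d : X -> X -> R) (t : qtree X) : {set X} * nat :=
  match t with
  | QRet C => (C, 0%N)
  | QAsk x y f => let r := run d (f (d x y)) in (r.1, r.2.+1)
  end.

Definition dist_set (X : finType) (d : X -> X -> R) (x : X) (C : {set X}) : \bar R :=
  \big[mine/+oo]_(c in C) (d x c)%:E.

Definition center_cost (X : finType) (d : X -> X -> R) (C : {set X}) : \bar R :=
  \big[maxe/-oo]_(x : X) dist_set d x C.

Definition OPT_center (X : finType) (d : X -> X -> R) (k : nat) : \bar R :=
  \big[mine/+oo]_(C : {set X} | #|C| == k) center_cost d C.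

End Defs.

From HB Require Import structures.
From mathcomp Require Import all_boot all_order all_algebra.
From mathcomp Require Import reals constructive_ereal.
From mathcomp Require Import zify lra.
Import Order.TTheory GRing.Theory Num.Theory.
Set Implicit Arguments. Unset Strict Implicit. Unset Printing Implicit Defensive.

(* Gonzalez's farthest-first traversal, run on rankings. For the current
   centers s, the rankings alone give the nearest center of every point (the
   first center in its ranking) and, for each center c, the farthest point of
   its cluster (the last point of c's ranking whose nearest center is c).
   Querying these |s| cluster radii therefore finds the point farthest from s,
   and growing s from one to k centers costs 1 + ... + (k-1) queries.  The k
   centers together with the point farthest from them are k+1 points at
   pairwise distance at least the covering radius rho; any k centers serve two
   of them with the same center, so OPT >= rho/2. *)

Lemma pairwise_head (T : eqType) (r : rel T) x s y :
  pairwise r (x :: s) -> y \in x :: s -> y = x \/ r x y.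
Proof.
rewrite pairwise_cons inE => /andP[/allP rx _] /orP[/eqP|ys]; first by left.
by right; apply: rx.
Qed.

Lemma pairwise_last (T : eqType) (r : rel T) x0 s y :
  pairwise r s -> y \in s -> y = last x0 s \/ r y (last x0 s).
Proof.
elim: s x0 => [//|x s IH] x0; rewrite pairwise_cons => /andP[/allP rx rs].
rewrite [last _ _]/= inE => /orP[/eqP->|ys]; last exact: IH.
have := mem_last x s; rewrite inE => /orP[/eqP->|]; first by left.
by right; apply: rx.
Qed.

Lemma pigeonhole_seq (T T' : finType) (f : T -> T') (A : {set T'}) (s : seq T) :
  uniq s -> (#|A| < size s)%N -> (forall x, x \in s -> f x \in A) ->
  exists a b, [/\ a \in s, b \in s, a != b & f a = f b].
Proof.
move=> us ltAs fA.
have [|noncol] :=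
  boolP [exists a : T, exists b : T, [&& a \in s, b \in s, a != b & f a == f b]].
  by case/existsP=> a /existsP[b /and4P[as_ bs ab /eqP fab]]; exists a, b.
have inj : {in s &, injective f}.
  move=> a b as_ bs fab; apply/eqP; apply: contraNT noncol => ab.
  by apply/existsP; exists a; apply/existsP; exists b; rewrite as_ bs ab fab eqxx.
suff : (size s <= #|A|)%N by rewrite leqNgt ltAs.
rewrite -(card_uniqP us) -(card_in_imset inj); apply: subset_leq_card.
by apply/subsetP => _ /imsetP[x xs ->]; apply: fA.
Qed.

Section Algorithm.
Variables (R : realType) (X : finType) (P : profile X).
Local Open Scope ring_scope.

Definition nearest (s : seq X) (x : X) : X := head x [seq y <- P x | y \in s].

Definition farthest_in_cluster (s : seq X) (c : X) : X :=
  last c [seq x <- P c | nearest s x == c].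

Fixpoint query_all (l : seq (X * X)) (K : seq R -> qtree R X) : qtree R X :=
  match l with
  | [::] => K [::]
  | (a, b) :: l' => QAsk a b (fun r => query_all l' (fun rs => K (r :: rs)))
  end.

Definition argmax_center (s : seq X) (rs : seq R) (x0 : X) : X :=
  [arg max_(c > head x0 s | c \in s) nth 0 rs (index c s)]%O.

Fixpoint gonzalez (n : nat) (s : seq X) (x0 : X) : qtree R X :=
  match n with
  | 0%N => @QRet R X [set c in s]
  | n'.+1 =>
      query_all [seq (c, farthest_in_cluster s c) | c <- s] (fun rs =>
        gonzalez n' (rcons s (farthest_in_cluster s (argmax_center s rs x0))) x0)
  end.

Lemma run_query_all (d : X -> X -> R) l K :
  run d (query_all l K) =
  let r := run d (K [seq d p.1 p.2 | p <- l]) in (r.1, (r.2 + size l)%N).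
Proof.
elim: l K => [|[a b] l IH] K /=; first by case: (run d (K [::])) => ? ?; rewrite addn0.
by rewrite IH addnS.
Qed.

Lemma gonzalez_query_count (d : X -> X -> R) n s x0 :
  ((run d (gonzalez n s x0)).2 * 2 = n * (n + 2 * size s - 1))%N.
Proof.
elim: n s => [|n IH] s //=.
by rewrite run_query_all /= size_map mulnDl IH size_rcons; nia.
Qed.

Section Correctness.
Variable d : X -> X -> R.
Hypotheses (d_metric : is_metric d) (P_consistent : consistent d P).

Let d_ge0 x y : 0 <= d x y. Proof. by case: d_metric. Qed.
Let d_sym x y : d x y = d y x. Proof. by case: d_metric. Qed.
Let d_xx x : d x x = 0. Proof. by case: d_metric => _ /(_ x x)[_ ->]. Qed.
Let d_triangle x y z : d x z <= d x y + d y z. Proof. by case: d_metric. Qed.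

Lemma mem_profile x y : y \in P x.
Proof. by case: (P_consistent x) => /perm_mem -> _; rewrite mem_enum. Qed.

Lemma pairwise_profile_filter x (a : pred X) :
  pairwise (fun y y' => d x y <= d x y') [seq y <- P x | a y].
Proof. by apply: pairwise_filter; case: (P_consistent x). Qed.

Lemma nearest_mem s x : s != [::] -> nearest s x \in s.
Proof.
case: s => [//|c s] _; rewrite /nearest.
set f := [seq y <- P x | y \in c :: s].
have cf : c \in f by rewrite mem_filter mem_head mem_profile.
have : head x f \in f by case: f cf => [//|y l] _; apply: mem_head.
by rewrite mem_filter => /andP[].
Qed.

Lemma nearest_le s x c : c \in s -> d x (nearest s x) <= d x c.
Proof.
move=> cs; have cf : c \in [seq y <- P x | y \in s] by rewrite mem_filter cs mem_profile.
move: cf (pairwise_profile_filter x (mem s)); rewrite /nearest.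
by case: [seq _ <- _ | _] => [//|y l] cf /pairwise_head/(_ cf) [->|].
Qed.

Lemma le_farthest_in_cluster s c x :
  nearest s x = c -> d c x <= d c (farthest_in_cluster s c).
Proof.
move=> xc; have xf : x \in [seq y <- P c | nearest s y == c].
  by rewrite mem_filter xc eqxx mem_profile.
rewrite /farthest_in_cluster.
by have [<-|] := pairwise_last c (pairwise_profile_filter _ _) xf.
Qed.

Lemma farthest_in_cluster_sep s c c' :
  c' \in s -> d c (farthest_in_cluster s c) <= d (farthest_in_cluster s c) c'.
Proof.
move=> c's; have := mem_last c [seq x <- P c | nearest s x == c].
rewrite -/(farthest_in_cluster s c) inE => /orP[/eqP->|]; first by rewrite d_xx.
rewrite mem_filter => /andP[/eqP fc_near _].
by rewrite d_sym -[X in d _ X <= _]fc_near nearest_le.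
Qed.

Definition covers (s : seq X) (r : R) := forall x, exists2 c, c \in s & d x c <= r.

(* A center may be added twice, but only once every point is at distance 0
   from the centers. *)
Definition separated (s : seq X) (r : R) :=
  (forall a b, a \in s -> b \in s -> a != b -> r <= d a b) /\ (uniq s \/ r = 0).

Lemma separated_rcons s r p r' :
  separated s r -> 0 <= r' -> r' <= r -> (forall c, c \in s -> r' <= d p c) ->
  separated (rcons s p) r'.
Proof.
move=> [sep us] r'_ge0 r'_le_r far_p; split.
  move=> a b; rewrite !mem_rcons !inE.
  move=> /orP[/eqP->|a_s] /orP[/eqP->|b_s] ab; first by rewrite eqxx in ab.
  - exact: far_p.
  - by rewrite d_sym; apply: far_p.
  - exact: le_trans r'_le_r (sep _ _ a_s b_s ab).
have [->|] := eqVneq r' 0; [by right | rewrite eq_le r'_ge0 andbT => r'_gt0].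
left; rewrite rcons_uniq; apply/andP; split.
  by apply: contraNN r'_gt0 => p_s; rewrite -(d_xx p) far_p.
by case: us => // r0; rewrite -r0 r'_le_r in r'_gt0.
Qed.

Definition is_net (s : seq X) (r : R) := covers s r /\ separated s r.

Definition cluster_radius (s : seq X) (c : X) : R := d c (farthest_in_cluster s c).

Lemma argmax_center_spec s x0 : s != [::] ->
  let c := argmax_center s [seq cluster_radius s c | c <- s] x0 in
  c \in s /\ forall c', c' \in s -> cluster_radius s c' <= cluster_radius s c.
Proof.
move=> s_neq0 /=; rewrite /argmax_center.
have hs : head x0 s \in s by case: s s_neq0 => // c s _; apply: mem_head.
have nth_radius c : c \in s ->
    nth 0 [seq cluster_radius s c | c <- s] (index c s) = cluster_radius s c.
  by move=> cs; rewrite (nth_map x0) ?index_mem // nth_index.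
case: (arg_maxP _ hs) => c cs cmax; split=> // c' c's.
by rewrite -nth_radius // -nth_radius //; apply: cmax.
Qed.

Lemma gonzalez_step s r x0 : s != [::] -> is_net s r ->
  let c := argmax_center s [seq cluster_radius s c | c <- s] x0 in
  is_net (rcons s (farthest_in_cluster s c)) (cluster_radius s c).
Proof.
move=> s_neq0 [cov sep] /=; have [cs cmax] := argmax_center_spec x0 s_neq0.
set c := argmax_center _ _ _ in cs cmax *; set p := farthest_in_cluster s c.
have far_p c' : c' \in s -> cluster_radius s c <= d p c'.
  exact: farthest_in_cluster_sep.
split.
  move=> x; exists (nearest s x); first by rewrite mem_rcons inE nearest_mem ?orbT.
  apply: le_trans (cmax _ (nearest_mem x s_neq0)).
  by rewrite d_sym; apply: le_farthest_in_cluster.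
apply: (separated_rcons sep (d_ge0 _ _) _ far_p).
by have [c' c's dpc'] := cov p; apply: le_trans (far_p _ c's) dpc'.
Qed.

Lemma gonzalez_net n s r x0 : s != [::] -> is_net s r ->
  exists s' r', [/\ (run d (gonzalez n s x0)).1 = [set c in s'],
                    size s' = (n + size s)%N & is_net s' r'].
Proof.
elim: n s r => [|n IH] s r s_neq0 net_s /=; first by exists s, r.
rewrite run_query_all /= -map_comp.
have s'_neq0 y : rcons s y != [::] by rewrite -size_eq0 size_rcons.
have [s' [r' [-> size_s' net_s']]] := IH _ _ (s'_neq0 _) (gonzalez_step x0 s_neq0 net_s).
by exists s', r'; rewrite size_s' size_rcons addnS.
Qed.

Lemma le_center_cost (O : {set X}) y o :
  o \in O -> (forall o', o' \in O -> d y o <= d y o') ->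
  ((d y o)%:E <= center_cost d O)%E.
Proof.
move=> oO o_min; apply: le_trans (le_bigmax _ _ y).
by apply: le_bigmin => [|o' o'O]; rewrite ?leey // lee_fin o_min.
Qed.

Lemma center_cost_le s r : s != [::] -> (forall x, d x (nearest s x) <= r) ->
  (center_cost d [set c in s] <= r%:E)%E.
Proof.
move=> s_neq0 near_r; apply: bigmax_le => [|x _]; first exact: leNye.
apply: (@bigmin_inf _ _ X _ (nearest s x)); first by rewrite inE nearest_mem.
by rewrite lee_fin.
Qed.

Lemma half_separation_le_center_cost (O : {set X}) L rho :
  O != set0 -> (#|O| < size L)%N -> separated L rho ->
  ((rho / 2)%:E <= center_cost d O)%E.
Proof.
case/set0Pn=> o0 o0O ltOL [sep uL].
pose f y := [arg min_(o < o0 in O) d y o]%O.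
have f_spec y : f y \in O /\ forall o, o \in O -> d y (f y) <= d y o.
  by rewrite /f; case: arg_minP.
have cost_f y : ((d y (f y))%:E <= center_cost d O)%E.
  by have [fO f_min] := f_spec y; apply: le_center_cost.
have [rho_le0|rho_gt0] := leP rho 0.
  by apply: le_trans (cost_f o0); rewrite lee_fin; have := d_ge0 o0 (f o0); lra.
have uniqL : uniq L by case: uL => // rho0; rewrite rho0 ltxx in rho_gt0.
have [a [b [aL bL ab fab]]] := pigeonhole_seq uniqL ltOL (fun y _ => (f_spec y).1).
have rho_le_dab := sep _ _ aL bL ab.
have [ha|ha] := leP (rho / 2) (d a (f a)).
  by apply: le_trans (cost_f a); rewrite lee_fin.
apply: le_trans (cost_f b); rewrite lee_fin -fab.
by have := d_triangle a (f a) b; rewrite (d_sym (f a) b); lra.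
Qed.

Lemma half_separation_le_OPT_center k L rho : (0 < k)%N ->
  size L = k.+1 -> separated L rho -> ((rho / 2)%:E <= OPT_center d k)%E.
Proof.
move=> k_gt0 sizeL sepL; apply: le_bigmin => [|C /eqP cardC]; first exact: leey.
apply: half_separation_le_center_cost sepL; last by rewrite cardC sizeL.
by rewrite -card_gt0 cardC.
Qed.

Lemma net_cost_le_twice_OPT_center s r : s != [::] -> is_net s r ->
  (center_cost d [set c in s] <= 2%:E * OPT_center d (size s))%E.
Proof.
move=> s_neq0 [cov sep]; have [c0 c0s] : exists c0, c0 \in s.
  by case: s s_neq0 {cov sep} => // c s _; exists c; apply: mem_head.
case: (@arg_maxP _ _ X c0 xpredT (fun x => d x (nearest s x)) isT) => p _ p_max.
set rp := d p (nearest s p) in p_max *.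
apply: le_trans (center_cost_le s_neq0 (fun x => p_max x isT)) _.
rewrite (_ : rp = 2 * (rp / 2)); last by lra.
rewrite EFinM lee_wpmul2l ?lee_fin //.
apply: half_separation_le_OPT_center (size_rcons s p) _.
  by rewrite lt0n size_eq0.
apply: separated_rcons sep (d_ge0 _ _) _ (fun c => nearest_le p (c := c)).
by have [c cs dpc] := cov p; apply: le_trans (nearest_le _ cs) dpc.
Qed.

Lemma net_seq1 x0 : exists r, is_net [:: x0] r.
Proof.
case: (@arg_maxP _ _ X x0 xpredT (fun x => d x x0) isT) => m _ m_max.
exists (d m x0); split.
  by move=> x; exists x0; [apply: mem_head | apply: m_max].
by split; [move=> a b /[!inE] /eqP-> /eqP->; rewrite eqxx | left].
Qed.

End Correctness.
End Algorithm.

Theorem mainTheorem1 (R : realType) (k : nat) (hk : (0 < k)%N) :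
  exists A : forall X : finType, profile X -> qtree R X,
    forall (X : finType) (d : X -> X -> R) (P : profile X),
      (k <= #|X|)%N -> is_metric d -> consistent d P ->
      let res := run d (A X P) in
      [/\ res.2 = ((k * k - k) %/ 2)%N,
          (#|res.1| <= k)%N &
          (center_cost d res.1 <= 2%:E * OPT_center d k)%E].
Proof.
case: k hk => [//|n] _.
exists (fun (X : finType) (P : profile X) =>
  if [pick x : X] is Some x0 then gonzalez R P n [:: x0] x0 else @QRet R X set0).
move=> X d P nX d_metric P_consistent /=.
case: pickP => [x0 _|X_empty]; last by rewrite (eq_card0 X_empty) in nX.
have count := gonzalez_query_count P d n [:: x0] x0.
have [r net_x0] := net_seq1 d x0.
have [s [r' [-> size_s net_s]]] :=
  gonzalez_net d_metric P_consistent n x0 (isT : [:: x0] != [::]) net_x0.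
rewrite addn1 in size_s; split.
- by rewrite -(mulnK (run _ _).2 (isT : (0 < 2)%N)) count /=; congr (_ %/ 2); nia.
- by rewrite cardsE -size_s card_size.
- rewrite -size_s; refine (net_cost_le_twice_OPT_center d_metric P_consistent _ net_s).
  by case: s size_s net_s.
Qed.
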